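(* On the set of irreducible transition matrices on the finite set $S$ that are reversible with respect to $\pi$, efficiency dominance is a partial order: (a) every such $P$ efficiency-dominates itself; (b) if $P$ efficiency-dominates $Q$ and $Q$ efficiency-dominates $P$, then $P=Q$; (c) if $P$ efficiency-dominates $Q$ and $Q$ efficiency-dominates $R$, then $P$ efficiency-dominates $R$.
   Context: $S$ is a finite set, and $\pi$ is a probability distribution on $S$ with $\pi(x)>0$ for all $x$. A transition matrix $P$ is reversible with respect to $\pi$ if $\pi(x)P(x,y)=\pi(y)P(y,x)$ for all $x,y$; irreducible if every state can be reached from every other with positive probability in some number of steps. For a Markov chain $X_1,X_2,\dots$ with transition matrix $P$ and $X_1\sim\pi$, $v(f,P)=\lim_{N\to\infty}\frac1N\mathrm{Var}\big(\sum_{i=1}^N f(X_i)\big)$. $P$ efficiency-dominates $Q$ if $v(f,P)\le v(f,Q)$ for all $f:S\to\mathbb R$. *)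

From HB Require Import structures.
From mathcomp Require Import all_boot all_order all_algebra.
From mathcomp Require Import all_classical all_reals all_analysis.
Set Implicit Arguments. Unset Strict Implicit. Unset Printing Implicit Defensive.
Import Order.TTheory GRing.Theory Num.Theory.
Import numFieldNormedType.Exports.
Local Open Scope ring_scope.

Section MC.
Variables (R : realType) (S : finType).

Definition is_pos_distr (pi : S -> R) : Prop :=
  (forall x, 0 < pi x) /\ \sum_(x : S) pi x = 1.

Definition is_transition (P : S -> S -> R) : Prop :=
  (forall x y, 0 <= P x y) /\ (forall x, \sum_(y : S) P x y = 1).

Definition reversible (pi : S -> R) (P : S -> S -> R) : Prop :=
  forall x y, pi x * P x y = pi y * P y x.

Fixpoint nstep (P : S -> S -> R) (n : nat) : S -> S -> R :=
  match n with
  | O => fun x y => if x == y then 1 else 0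
  | m.+1 => fun x y => \sum_(z : S) nstep P m x z * P z y
  end.

Definition irreducible (P : S -> S -> R) : Prop :=
  forall x y, exists n : nat, 0 < nstep P n x y.

(* Probability that the chain X_1 ~ pi, transitions P, has path
   (X_1, ..., X_{n+1}) = (t 0, ..., t n). *)
Definition path_prob (pi : S -> R) (P : S -> S -> R) (n : nat)
    (t : {ffun 'I_n.+1 -> S}) : R :=
  pi (t ord0) * \prod_(i < n) P (t (widen_ord (leqnSn n) i)) (t (lift ord0 i)).

Definition path_sum (f : S -> R) (n : nat) (t : {ffun 'I_n.+1 -> S}) : R :=
  \sum_(i < n.+1) f (t i).

Definition mean_sum (pi : S -> R) (P : S -> S -> R) (f : S -> R) (n : nat) : R :=
  \sum_(t : {ffun 'I_n.+1 -> S}) path_prob pi P t * path_sum f t.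

Definition var_sum (pi : S -> R) (P : S -> S -> R) (f : S -> R) (n : nat) : R :=
  \sum_(t : {ffun 'I_n.+1 -> S})
     path_prob pi P t * (path_sum f t - mean_sum pi P f n) ^+ 2.

(* v(f,P) = lim_{N -> oo} Var(sum_{i=1}^N f(X_i)) / N  (indexed by N = n+1) *)
Definition asym_var (pi : S -> R) (f : S -> R) (P : S -> S -> R) : R :=
  limn (fun n : nat => var_sum pi P f n / n.+1%:R).

Definition eff_dominates (pi : S -> R) (P Q : S -> S -> R) : Prop :=
  forall f : S -> R, asym_var pi f P <= asym_var pi f Q.

Definition admissible (pi : S -> R) (P : S -> S -> R) : Prop :=
  is_transition P /\ irreducible P /\ reversible pi P.

End MC.

(* Reflexivity and transitivity are inherited from the order on the reals, so
   the content is antisymmetry: the map f |-> v(f, P) determines P.  For any h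
   and g = h - P h, conditioning E[(g(X_1) + ... + g(X_n))^2] on the last step
   gives v(g, P) = 2 <h, g> - <g, g> in L^2(pi).  As P is self-adjoint, v(., P)
   therefore determines, by polarization, the symmetric form
   (g1, g2) |-> <(I - P)^-1 g1, g2> on centred functions; I - P is invertible
   there because harmonic functions of an irreducible chain are constant.  So
   equal asymptotic variances force P = Q on centred functions, and P 1 = Q 1 = 1
   does the rest. *)

From HB Require Import structures.
From mathcomp Require Import all_boot all_order all_algebra.
From mathcomp Require Import all_classical all_reals all_analysis.
From mathcomp Require Import ring lra.
Import Order.TTheory GRing.Theory Num.Theory.
Import numFieldNormedType.Exports.
Local Open Scope ring_scope.
Set Implicit Arguments. Unset Strict Implicit. Unset Printing Implicit Defensive.

Section Paths.
Variable S : finType.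

Definition path_init n (t : {ffun 'I_n.+2 -> S}) : {ffun 'I_n.+1 -> S} :=
  [ffun i => t (widen_ord (leqnSn _) i)].

Definition path_rcons n (t : {ffun 'I_n.+1 -> S}) (y : S) : {ffun 'I_n.+2 -> S} :=
  [ffun i : 'I_n.+2 => if (i < n.+1)%N then t (inord i) else y].

Lemma path_rconsK n (t : {ffun 'I_n.+1 -> S}) y :
  path_init (path_rcons t y) = t /\ path_rcons t y ord_max = y.
Proof.
split; last by rewrite ffunE /= ltnn.
apply/ffunP => i; rewrite !ffunE /= ltn_ord; congr (t _); apply: val_inj.
by rewrite /= inordK // ltnS ltnW.
Qed.

Lemma path_initK n (t : {ffun 'I_n.+2 -> S}) :
  path_rcons (path_init t) (t ord_max) = t.
Proof.
apply/ffunP => i; rewrite !ffunE /=; case: ifP => hi; congr (t _); apply: val_inj.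
  by rewrite /= inordK.
by apply/eqP; rewrite /= eqn_leq leqNgt hi -ltnS ltn_ord.
Qed.

Lemma sum_paths_last (V : nmodType) n (G : {ffun 'I_n.+1 -> S} -> S -> V) :
  \sum_(t : {ffun 'I_n.+2 -> S}) G (path_init t) (t ord_max) =
  \sum_(t : {ffun 'I_n.+1 -> S}) \sum_(y : S) G t y.
Proof.
rewrite pair_big (reindex (fun p => path_rcons p.1 p.2)) /=.
  by apply: eq_bigr => -[t y] _; have [-> ->] := path_rconsK t y.
exists (fun t => (path_init t, t ord_max)) => [[t y]|t] _ /=.
  by have [-> ->] := path_rconsK t y.
exact: path_initK.
Qed.

Lemma sum_paths1 (V : nmodType) (G : {ffun 'I_1 -> S} -> V) :
  \sum_(t : {ffun 'I_1 -> S}) G t = \sum_(x : S) G [ffun => x].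
Proof.
rewrite (reindex (fun x : S => [ffun => x])) //.
exists (fun t : {ffun 'I_1 -> S} => t ord0) => [x|t] _; first by rewrite ffunE.
by apply/ffunP => i; rewrite !ffunE (ord1 i).
Qed.

Variable R : realType.

Lemma path_prob_last (pi : S -> R) (P : S -> S -> R) n (t : {ffun 'I_n.+2 -> S}) :
  path_prob pi P t =
  path_prob pi P (path_init t) * P (path_init t ord_max) (t ord_max).
Proof.
rewrite /path_prob big_ord_recr /= -mulrA !ffunE; congr (pi (t _) * (_ * _)).
- exact: val_inj.
- by apply: eq_bigr => i _; rewrite !ffunE; congr (P (t _) (t _)); apply: val_inj.
- by congr (P _ (t _)); apply: val_inj.
Qed.

Lemma path_sum_last (f : S -> R) n (t : {ffun 'I_n.+2 -> S}) :
  path_sum f t = path_sum f (path_init t) + f (t ord_max).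
Proof.
rewrite /path_sum big_ord_recr /=; congr (_ + _).
by apply: eq_bigr => i _; rewrite ffunE.
Qed.

End Paths.

Definition kmul (R : pzRingType) (S : finType) (P : S -> S -> R) (u : S -> R) : S -> R :=
  fun x => \sum_y P x y * u y.

Definition laplace (R : pzRingType) (S : finType) (P : S -> S -> R) (u : S -> R) :
  S -> R :=
  fun x => u x - kmul P u x.

Definition mean (R : pzRingType) (S : finType) (pi : S -> R) (u : S -> R) : R :=
  \sum_x pi x * u x.

Definition inner (R : pzRingType) (S : finType) (pi : S -> R) (u v : S -> R) : R :=
  \sum_x pi x * u x * v x.

Section Operators.
Variables (R : comPzRingType) (S : finType) (pi : S -> R) (P : S -> S -> R).

Lemma kmulD u v x : kmul P (fun y => u y + v y) x = kmul P u x + kmul P v x.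
Proof. by rewrite /kmul -big_split; apply: eq_bigr => y _; rewrite mulrDr. Qed.

Lemma kmulB u v x : kmul P (fun y => u y - v y) x = kmul P u x - kmul P v x.
Proof. by rewrite /kmul -sumrB; apply: eq_bigr => y _; rewrite mulrBr. Qed.

Lemma laplaceD u v : laplace P (fun y => u y + v y) =
  (fun x => laplace P u x + laplace P v x).
Proof. by apply: funext => x; rewrite /laplace kmulD; ring. Qed.

Lemma meanB u v : mean pi (fun x => u x - v x) = mean pi u - mean pi v.
Proof. by rewrite /mean -sumrB; apply: eq_bigr => x _; rewrite mulrBr. Qed.

Lemma innerE u v : inner pi u v = mean pi (fun x => u x * v x).
Proof. by apply: eq_bigr => x _; rewrite mulrA. Qed.

Lemma innerC u v : inner pi u v = inner pi v u.
Proof. by apply: eq_bigr => x _; ring. Qed.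

Lemma innerDl u v w : inner pi (fun x => u x + v x) w = inner pi u w + inner pi v w.
Proof. by rewrite /inner -big_split; apply: eq_bigr => x _ /=; ring. Qed.

Lemma innerBl u v w : inner pi (fun x => u x - v x) w = inner pi u w - inner pi v w.
Proof. by rewrite /inner -sumrB; apply: eq_bigr => x _ /=; ring. Qed.

Lemma innerDr u v w : inner pi w (fun x => u x + v x) = inner pi w u + inner pi w v.
Proof. by rewrite innerC innerDl !(innerC w). Qed.

Lemma innerBr u v w : inner pi w (fun x => u x - v x) = inner pi w u - inner pi w v.
Proof. by rewrite innerC innerBl !(innerC w). Qed.

End Operators.

Lemma bounded_div_cvg0 (R : realType) (u : nat -> R) (C : R) :
  (forall n, `|u n| <= C) -> (u n / n.+1%:R @[n --> \oo] --> 0)%classic.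
Proof.
move=> uC; apply: (squeeze_cvgr (f := fun n => - (C * harmonic n))
  (h := fun n => C * harmonic n)).
- apply: nearW => n /=; have := uC n; rewrite ler_norml => /andP[Clo Chi].
  by rewrite -mulNr !ler_wpM2r // invr_ge0.
- by rewrite -oppr0 -(mulr0 C); apply: cvgN; apply: cvgMl_tmp; exact: cvg_harmonic.
- by rewrite -(mulr0 C); apply: cvgMl_tmp; exact: cvg_harmonic.
Qed.

Definition path_exp (R : realType) (S : finType) (pi : S -> R) (P : S -> S -> R) n
    (F : {ffun 'I_n.+1 -> S} -> R) : R :=
  \sum_t path_prob pi P t * F t.

Section ReversibleChain.
Variables (R : realType) (S : finType) (pi : S -> R) (P : S -> S -> R).
Hypotheses (Pge0 : forall x y, 0 <= P x y) (Prow : forall x, \sum_y P x y = 1).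
Hypotheses (Prev : reversible pi P) (pige0 : forall x, 0 <= pi x).
Local Notation E := (path_exp pi P).

Lemma kmul_cst c x : kmul P (fun=> c) x = c.
Proof. by rewrite /kmul -big_distrl /= Prow mul1r. Qed.

Lemma kmul_norm_le (M : R) u x : (forall y, `|u y| <= M) -> `|kmul P u x| <= M.
Proof.
move=> uM; apply: le_trans (ler_norm_sum _ _ _) _.
apply: le_trans (_ : \sum_y P x y * M <= M); last by rewrite -big_distrl /= Prow mul1r.
by apply: ler_sum => y _; rewrite normrM ger0_norm // ler_wpM2l.
Qed.

Lemma mean_kmul u : mean pi (kmul P u) = mean pi u.
Proof.
rewrite /mean /kmul; under eq_bigr do rewrite big_distrr /=.
rewrite exchange_big /=; apply: eq_bigr => y _.
under eq_bigr do rewrite mulrA Prev -mulrA.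
by rewrite -big_distrr /= -big_distrl /= Prow mul1r.
Qed.

Lemma mean_laplace u : mean pi (laplace P u) = 0.
Proof. by rewrite meanB mean_kmul subrr. Qed.

Lemma inner_kmul u v : inner pi (kmul P u) v = inner pi u (kmul P v).
Proof.
rewrite /inner /kmul.
transitivity (\sum_x \sum_y pi x * P x y * u y * v x).
  apply: eq_bigr => x _; rewrite big_distrr big_distrl /=.
  by apply: eq_bigr => y _; ring.
rewrite exchange_big /=; apply: eq_bigr => y _.
rewrite big_distrr /=; apply: eq_bigr => x _.
by rewrite Prev; ring.
Qed.

Lemma inner_laplace u v : inner pi (laplace P u) v = inner pi u (laplace P v).
Proof. by rewrite innerBl innerBr inner_kmul. Qed.

Lemma path_expD n (F G : {ffun 'I_n.+1 -> S} -> R) :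
  E (fun t => F t + G t) = E F + E G.
Proof. by rewrite /path_exp -big_split; apply: eq_bigr => t _; rewrite mulrDr. Qed.

Lemma path_expZ n c (F : {ffun 'I_n.+1 -> S} -> R) : E (fun t => c * F t) = c * E F.
Proof. by rewrite /path_exp big_distrr; apply: eq_bigr => t _ /=; ring. Qed.

Lemma path_exp1 (F : {ffun 'I_1 -> S} -> R) : E F = \sum_x pi x * F [ffun => x].
Proof.
rewrite /path_exp sum_paths1; apply: eq_bigr => x _.
by rewrite /path_prob big_ord0 mulr1 ffunE.
Qed.

Lemma path_exp_last n (G : {ffun 'I_n.+1 -> S} -> S -> R) :
  E (fun t : {ffun 'I_n.+2 -> S} => G (path_init t) (t ord_max)) =
  E (fun t => kmul P (G t) (t ord_max)).
Proof.
pose H t y := path_prob pi P t * (P (t ord_max) y * G t y).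
transitivity (\sum_(t : {ffun 'I_n.+2 -> S}) H (path_init t) (t ord_max)).
  by apply: eq_bigr => t _; rewrite /H path_prob_last mulrA.
by rewrite sum_paths_last; apply: eq_bigr => t _; rewrite /kmul big_distrr.
Qed.

Lemma path_exp_final n (phi : S -> R) :
  E (fun t : {ffun 'I_n.+1 -> S} => phi (t ord_max)) = mean pi phi.
Proof.
elim: n phi => [|n IH] phi.
  by rewrite path_exp1; apply: eq_bigr => x _; rewrite ffunE.
by rewrite (path_exp_last (fun _ y => phi y)) IH mean_kmul.
Qed.

Lemma mean_sumE (f : S -> R) n : mean_sum pi P f n = n.+1%:R * mean pi f.
Proof.
change (E (fun t : {ffun 'I_n.+1 -> S} => path_sum f t) = n.+1%:R * mean pi f).
elim: n => [|n IH].
  by rewrite path_exp1 mul1r; apply: eq_bigr => x _; rewrite /path_sum big_ord1 ffunE.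
under [in LHS]eq_fun do rewrite path_sum_last.
rewrite (path_exp_last (fun t y => path_sum f t + f y)).
under eq_fun do rewrite kmulD kmul_cst //.
by rewrite path_expD IH path_exp_final mean_kmul -[in RHS]natr1 mulrDl mul1r.
Qed.

Section Poisson.
Variable h : S -> R.
Local Notation g := (laplace P h).

Lemma path_exp_sum_mul_final n (phi : S -> R) :
  E (fun t : {ffun 'I_n.+1 -> S} => path_sum g t * phi (t ord_max)) =
  inner pi (fun x => h x - iter n.+1 (kmul P) h x) phi.
Proof.
elim: n phi => [|n IH] phi.
  rewrite path_exp1; apply: eq_bigr => x _.
  by rewrite /path_sum big_ord1 !ffunE mulrA.
under [in LHS]eq_fun do rewrite path_sum_last.
rewrite (path_exp_last (fun t y => (path_sum g t + g y) * phi y)).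
have kmul_split t : kmul P (fun y => (path_sum g t + g y) * phi y) (t ord_max) =
    path_sum g t * kmul P phi (t ord_max) + kmul P (fun y => g y * phi y) (t ord_max).
  by rewrite /kmul big_distrr -big_split; apply: eq_bigr => y _ /=; ring.
under eq_fun do rewrite kmul_split.
rewrite path_expD IH path_exp_final mean_kmul -innerE innerBl -!inner_kmul -iterS.
by rewrite /laplace !innerBl; ring.
Qed.

Let autocov k := inner pi (iter k (kmul P) h) h.

Lemma inner_iter_laplace k : inner pi (iter k (kmul P) h) g = autocov k - autocov k.+1.
Proof. by rewrite /laplace innerBr -inner_kmul. Qed.

Lemma path_exp_sq_last n :
  E (fun t : {ffun 'I_n.+2 -> S} => path_sum g t ^+ 2) =
  E (fun t : {ffun 'I_n.+1 -> S} => path_sum g t ^+ 2)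
  + inner pi g g + 2 * inner pi (kmul P h) g - 2 * autocov n.+2 + 2 * autocov n.+3.
Proof.
under [in LHS]eq_fun do rewrite path_sum_last.
rewrite (path_exp_last (fun t y => (path_sum g t + g y) ^+ 2)).
have kmul_sq t : kmul P (fun y => (path_sum g t + g y) ^+ 2) (t ord_max) =
    path_sum g t ^+ 2 + 2 * (path_sum g t * kmul P g (t ord_max))
    + kmul P (fun y => g y * g y) (t ord_max).
  rewrite /kmul; transitivity (\sum_y (path_sum g t ^+ 2 * P (t ord_max) y
      + 2 * (path_sum g t * (P (t ord_max) y * g y)) + P (t ord_max) y * (g y * g y))).
    by apply: eq_bigr => y _; ring.
  by rewrite !big_split /= -!big_distrr /= Prow mulr1.
under eq_fun do rewrite kmul_sq.
rewrite !path_expD path_expZ path_exp_sum_mul_final path_exp_final mean_kmul -innerE.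
by rewrite innerBl -!inner_kmul (inner_iter_laplace n.+2); ring.
Qed.

Let c := inner pi g g + 2 * inner pi (kmul P h) g.
Let K := E (fun t : {ffun 'I_1 -> S} => path_sum g t ^+ 2) - c - 2 * autocov 2.

Lemma path_exp_sq_closed n :
  E (fun t : {ffun 'I_n.+1 -> S} => path_sum g t ^+ 2) =
  n.+1%:R * c + K + 2 * autocov n.+2.
Proof.
elim: n => [|n IH]; first by rewrite /K; ring.
by rewrite path_exp_sq_last IH -[in RHS]natr1 /c; ring.
Qed.

Let M := \sum_y `|h y|.

Lemma iter_kmul_norm_le k x : `|iter k (kmul P) h x| <= M.
Proof.
elim: k x => [|k IH] x /=; last exact: kmul_norm_le.
by rewrite /M (bigD1 x) //= lerDl sumr_ge0.
Qed.

Lemma autocov_norm_le k : `|autocov k| <= \sum_x pi x * M * `|h x|.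
Proof.
apply: le_trans (ler_norm_sum _ _ _) _; apply: ler_sum => x _.
by rewrite !normrM ger0_norm // ler_wpM2r // ler_wpM2l // iter_kmul_norm_le.
Qed.

Lemma asym_var_laplace : asym_var pi g P = 2 * inner pi h g - inner pi g g.
Proof.
have var_sumE n : var_sum pi P g n = E (fun t : {ffun 'I_n.+1 -> S} => path_sum g t ^+ 2).
  rewrite /var_sum /path_exp mean_sumE mean_laplace mulr0.
  by apply: eq_bigr => t _; rewrite subr0.
have cvg_c : (var_sum pi P g n / n.+1%:R @[n --> \oo] --> c)%classic.
  have -> : (fun n => var_sum pi P g n / n.+1%:R) =
      (fun n => c + (K + 2 * autocov n.+2) / n.+1%:R).
    by apply: funext => n; rewrite var_sumE path_exp_sq_closed; field.
  have Kbound n : `|K + 2 * autocov n.+2| <= `|K| + 2 * \sum_x pi x * M * `|h x|.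
    rewrite (le_trans (ler_normD _ _)) // lerD2l normrM ger0_norm //.
    by rewrite ler_pM2l // autocov_norm_le.
  by have := cvgD (cvg_cst c) (bounded_div_cvg0 Kbound); rewrite addr0 => /(_ _ _); apply.
have gg : inner pi g g = inner pi h g - inner pi (kmul P h) g.
  by rewrite /laplace innerBl.
rewrite /asym_var (cvg_lim (@Rhausdorff R) cvg_c) /c; lra.
Qed.

End Poisson.

Lemma asym_var_polar h1 h2 :
  4 * inner pi h1 (laplace P h2) =
  asym_var pi (fun x => laplace P h1 x + laplace P h2 x) P
  - asym_var pi (laplace P h1) P - asym_var pi (laplace P h2) P
  + 2 * inner pi (laplace P h1) (laplace P h2).
Proof.
have sym : inner pi h2 (laplace P h1) = inner pi h1 (laplace P h2).
  by rewrite -inner_laplace innerC.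
have symL : inner pi (laplace P h2) (laplace P h1) =
    inner pi (laplace P h1) (laplace P h2) by rewrite innerC.
rewrite -laplaceD !asym_var_laplace laplaceD.
move: sym symL; move: (laplace P h1) (laplace P h2) => L1 L2 sym symL.
rewrite !innerDl !innerDr; lra.
Qed.

End ReversibleChain.

Lemma kmul_surj (R : fieldType) (S : finType) (A : S -> S -> R) :
    (forall d, kmul A d =1 (fun=> 0) -> d =1 (fun=> 0)) ->
  forall g, exists h, kmul A h =1 g.
Proof.
move=> Ainj g.
pose M : 'M[R]_#|S| := \matrix_(i, j) A (enum_val j) (enum_val i).
pose fun_of (w : 'rV[R]_#|S|) x := w 0 (enum_rank x).
have kmulE w x : kmul A (fun_of w) x = (w *m M) 0 (enum_rank x).
  rewrite mxE /kmul (reindex (fun i : 'I_#|S| => enum_val i)); last first.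
    by exists enum_rank => y _; rewrite ?enum_valK ?enum_rankK.
  by apply: eq_bigr => i _; rewrite mxE enum_rankK mulrC /fun_of enum_valK.
have Munit : M \in unitmx.
  rewrite -row_free_unit -kermx_eq0; apply/rowV0P => w /sub_kermxP wM.
  apply/rowP => j; rewrite mxE -[j]enum_valK; apply: (Ainj (fun_of w)) => x.
  by rewrite kmulE wM mxE.
exists (fun_of (\row_i g (enum_val i) *m invmx M)) => x.
by rewrite kmulE mulmxKV // mxE enum_rankK.
Qed.

Lemma sum_delta (R : pzSemiRingType) (S : finType) (x : S) (F : S -> R) :
  \sum_y (if x == y then 1 else 0) * F y = F x.
Proof.
rewrite (bigD1 x) //= eqxx mul1r big1 ?addr0 // => y /negbTE.
by rewrite eq_sym => ->; rewrite mul0r.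
Qed.

Section Irreducible.
Variables (R : realType) (S : finType) (P : S -> S -> R).
Hypotheses (Pge0 : forall x y, 0 <= P x y) (Prow : forall x, \sum_y P x y = 1).
Hypothesis Pirr : irreducible P.

Lemma nstep_ge0 n x y : 0 <= nstep P n x y.
Proof.
elim: n x y => [|n IH] x y /=; first by case: (x == y).
by apply: sumr_ge0 => z _; apply: mulr_ge0.
Qed.

Lemma kmul_nstep_harmonic d : kmul P d =1 d -> forall n, kmul (nstep P n) d =1 d.
Proof.
move=> Pd; elim=> [|n IH] x; first exact: sum_delta.
rewrite -[RHS]IH /kmul /=; under eq_bigr do rewrite big_distrl /=.
rewrite exchange_big /=; apply: eq_bigr => z _.
by rewrite -Pd /kmul big_distrr /=; apply: eq_bigr => y _; rewrite mulrA.
Qed.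

Lemma nstep_row n x : \sum_y nstep P n x y = 1.
Proof.
have := kmul_nstep_harmonic (kmul_cst Prow 1) n x.
by rewrite /kmul; under eq_bigr do rewrite mulr1.
Qed.

Lemma harmonic_const d : kmul P d =1 d -> forall x y, d x = d y.
Proof.
move=> Pd x.
have [m _ dm] := @arg_maxP _ _ S x predT d isT.
suff dmE y : d y = d m by move=> y; rewrite !dmE.
have [n Pn] := Pirr m y.
have sum0 : \sum_z nstep P n m z * (d m - d z) = 0.
  under eq_bigr do rewrite mulrBr.
  rewrite sumrB -/(kmul (nstep P n) d m) (kmul_nstep_harmonic Pd).
  by rewrite -big_distrl /= nstep_row mul1r subrr.
have ge0 z : true -> 0 <= nstep P n m z * (d m - d z).
  by move=> _; rewrite mulr_ge0 ?nstep_ge0 // subr_ge0; apply: dm.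
have /eqP : nstep P n m y * (d m - d y) = 0 := psumr_eq0P ge0 sum0 isT.
by rewrite mulf_eq0 (gt_eqF Pn) subr_eq0 => /eqP.
Qed.

End Irreducible.

(* I - P + Pi, the inverse of the fundamental matrix of Kemeny and Snell. *)
Definition fund_kernel (R : realType) (S : finType) (pi : S -> R) (P : S -> S -> R) :
  S -> S -> R := fun x y => (if x == y then 1 else 0) - P x y + pi y.

Section PoissonEquation.
Variables (R : realType) (S : finType) (pi : S -> R) (P : S -> S -> R).
Hypotheses (Pge0 : forall x y, 0 <= P x y) (Prow : forall x, \sum_y P x y = 1).
Hypotheses (Prev : reversible pi P) (Pirr : irreducible P).
Hypothesis pisum : \sum_x pi x = 1.

Lemma kmul_fund_kernel d x : kmul (fund_kernel pi P) d x = laplace P d x + mean pi d.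
Proof.
rewrite /kmul /fund_kernel; under eq_bigr do rewrite mulrDl mulrBl.
by rewrite big_split sumrB /= sum_delta.
Qed.

Lemma mean_kmul_fund_kernel d : mean pi (kmul (fund_kernel pi P) d) = mean pi d.
Proof.
rewrite /mean; under eq_bigr do rewrite kmul_fund_kernel mulrDr.
rewrite big_split -/(mean pi (laplace P d)) mean_laplace //.
by rewrite -big_distrl /= pisum mul1r add0r.
Qed.

Lemma kmul_fund_kernel_inj d : kmul (fund_kernel pi P) d =1 (fun=> 0) -> d =1 (fun=> 0).
Proof.
move=> Ld0.
have md : mean pi d = 0.
  by rewrite -mean_kmul_fund_kernel /mean big1 // => x _; rewrite Ld0 mulr0.
have Pd : kmul P d =1 d.
  move=> x; have := Ld0 x; rewrite kmul_fund_kernel md addr0.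
  by move/eqP; rewrite subr_eq0 eq_sym => /eqP.
move=> x; rewrite -md /mean.
under eq_bigr do rewrite (harmonic_const Pge0 Prow Pirr Pd _ x).
by rewrite -big_distrl /= pisum mul1r.
Qed.

Lemma poisson_solvable g : mean pi g = 0 -> exists2 h, mean pi h = 0 & laplace P h = g.
Proof.
move=> mg; have [h Lh] := kmul_surj kmul_fund_kernel_inj g.
have mh : mean pi h = 0.
  by rewrite -mean_kmul_fund_kernel -mg /mean; apply: eq_bigr => x _; rewrite Lh.
exists h => //; apply: funext => x.
by have := Lh x; rewrite kmul_fund_kernel mh addr0.
Qed.

End PoissonEquation.

Lemma inner_self_eq0 (R : realDomainType) (S : finType) (pi : S -> R) u :
  (forall x, 0 < pi x) -> inner pi u u = 0 -> u =1 (fun=> 0).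
Proof.
move=> pipos uu0 x.
have ge0 y : true -> 0 <= pi y * u y * u y.
  by move=> _; rewrite -mulrA -expr2 mulr_ge0 ?sqr_ge0 // ltW.
have /eqP : pi x * u x * u x = 0 := psumr_eq0P ge0 uu0 isT.
by rewrite -mulrA mulf_eq0 (gt_eqF (pipos x)) mulf_eq0 orbb => /eqP.
Qed.

Lemma kernel_eq_of_centered (R : realType) (S : finType) (pi : S -> R)
    (P Q : S -> S -> R) :
    \sum_x pi x = 1 -> (forall x, \sum_y P x y = 1) -> (forall x, \sum_y Q x y = 1) ->
    (forall h, mean pi h = 0 -> kmul P h = kmul Q h) ->
  P = Q.
Proof.
move=> pisum Prow Qrow PQ; apply/funext => x; apply/funext => y.
pose u z := (if y == z then 1 else 0) - pi y.
have mu : mean pi u = 0.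
  rewrite meanB /mean; under eq_bigr do rewrite mulrC.
  by rewrite sum_delta -big_distrl /= pisum mul1r subrr.
have kmulE (T : S -> S -> R) : (forall x, \sum_y T x y = 1) -> T x y = kmul T u x + pi y.
  move=> Trow; rewrite kmulB kmul_cst // subrK.
  by rewrite /kmul; under eq_bigr do rewrite mulrC; rewrite sum_delta.
by rewrite (kmulE P) // (kmulE Q) // (PQ u mu).
Qed.

Section Determination.
Variables (R : realType) (S : finType) (pi : S -> R) (P Q : S -> S -> R).
Hypotheses (pipos : forall x, 0 < pi x) (pisum : \sum_x pi x = 1).
Hypotheses (Padm : admissible pi P) (Qadm : admissible pi Q).
Hypothesis PQ : forall f, asym_var pi f P = asym_var pi f Q.

Lemma laplace_eq_asym_var h k :
  mean pi h = 0 -> mean pi k = 0 -> laplace P h = laplace Q k -> h = k.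
Proof.
have [[P0 P1] [Pirr Prev]] := Padm; have [[Q0 Q1] [Qirr Qrev]] := Qadm.
have pige0 x : 0 <= pi x by apply: ltW.
move=> mh mk hk; pose d x := h x - k x.
have md : mean pi d = 0 by rewrite meanB mh mk subrr.
have [h' _ Lh'] := poisson_solvable P0 P1 Prev Pirr pisum md.
have [k' _ Lk'] := poisson_solvable Q0 Q1 Qrev Qirr pisum md.
have polarP := asym_var_polar P0 P1 Prev pige0 h h'.
have polarQ := asym_var_polar Q0 Q1 Qrev pige0 k k'.
rewrite Lh' hk !PQ in polarP; rewrite Lk' in polarQ.
(* The polarizations express 4 <h, d> and 4 <k, d> by the same asymptotic
   variances, hence <d, d> = 0. *)
have dd : inner pi d d = 0 by rewrite innerBl; lra.
by apply/funext => x; apply/eqP; rewrite -subr_eq0; apply/eqP/(inner_self_eq0 pipos dd).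
Qed.

Lemma kmul_eq_asym_var h : mean pi h = 0 -> kmul P h = kmul Q h.
Proof.
have [[_ P1] [_ Prev]] := Padm; have [[Q0 Q1] [Qirr Qrev]] := Qadm.
move=> mh; have mLh : mean pi (laplace P h) = 0 by exact: mean_laplace.
have [k mk Lk] := poisson_solvable Q0 Q1 Qrev Qirr pisum mLh.
have hk : h = k by apply: laplace_eq_asym_var.
apply/funext => x; have /(congr1 (fun f => f x)) := Lk.
by rewrite -hk /laplace => /addrI /oppr_inj.
Qed.

Lemma kernel_eq_asym_var : P = Q.
Proof.
have [[_ P1] _] := Padm; have [[_ Q1] _] := Qadm.
exact: kernel_eq_of_centered pisum P1 Q1 kmul_eq_asym_var.
Qed.

End Determination.

Unset Implicit Arguments.

Theorem theorem3 (R : realType) (S : finType) (pi : S -> R)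
    (hpi : is_pos_distr pi) :
  (forall P : S -> S -> R, admissible pi P -> eff_dominates pi P P) /\
  (forall P Q : S -> S -> R, admissible pi P -> admissible pi Q ->
     eff_dominates pi P Q -> eff_dominates pi Q P -> P = Q) /\
  (forall P Q T : S -> S -> R, admissible pi P -> admissible pi Q ->
     admissible pi T ->
     eff_dominates pi P Q -> eff_dominates pi Q T -> eff_dominates pi P T).
Proof.
have [pipos pisum] := hpi.
split; first by move=> P _ f.
split; last by move=> P Q T _ _ _ PQ QT f; exact: le_trans (PQ f) (QT f).
move=> P Q Padm Qadm PQ QP; apply: kernel_eq_asym_var pipos pisum Padm Qadm _ => f.
by apply/le_anti; rewrite PQ QP.
Qed.
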